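(* Let $S$ be $\mathbb{R}$ or $\mathbb{C}$. Then: (i) $n\mapsto g\big[\mathbf{CP}_n(S)\big]$ is non-decreasing; (ii) $g\big[\mathbf{CP}_{2n}(S)\big]\ge2\,g\big[\mathbf{CP}_n(S)\big]$ for all $n\in\mathbb{N}$; (iii) if $k\ge2$ is an integer, $C>0$, and $g\big[\mathbf{CP}_n(S)\big]\ge Cn$ for all $n=k,\dots,2k-1$, then $g\big[\mathbf{CP}_n(S)\big]\ge\frac{(1/k;1/2)_\infty}{1-1/k}\,Cn$ for all $n\ge k$, where $(x;q)_\infty=\prod_{i=0}^{\infty}(1-xq^i)$.
   Context: For an $n\times n$ complex matrix $A=(a_{i,j})$, Gaussian elimination without pivoting is the recursion $a^{(1)}_{i,j}=a_{i,j}$ and $a^{(k+1)}_{i,j}=a^{(k)}_{i,j}-a^{(k)}_{i,k}a^{(k)}_{k,j}/a^{(k)}_{k,k}$ for $k+1\le i,j\le n$, $k=1,\dots,n-1$ (defined when all pivots are nonzero). Growth factor: $g(A)=\max_{i,j,k}|a^{(k)}_{i,j}|/\max_{i,j}|a_{i,j}|$; for a set $\mathbf{X}$ of matrices, $g[\mathbf{X}]=\sup_{A\in\mathbf{X}}g(A)$. $\mathbf{CP}_n(S)$ is the set of invertible $A\in S^{n\times n}$ for which elimination is defined and $|a^{(k)}_{i,j}|\le|a^{(k)}_{k,k}|$ for all $k$ and all $i,j\ge k$. *)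

From HB Require Import structures.
From mathcomp Require Import all_boot all_order all_algebra.
From mathcomp Require Import all_classical all_reals all_analysis.
From mathcomp Require Import complex.
Set Implicit Arguments. Unset Strict Implicit. Unset Printing Implicit Defensive.
Import Order.TTheory GRing.Theory Num.Theory.
Local Open Scope ring_scope.
Local Open Scope classical_set_scope.

Section GE.
Variables (R : realType) (F : fieldType) (nrm : F -> R).

(* One elimination step with (0-based) pivot index k:
   a^{(k+1)}_{ij} = a^{(k)}_{ij} - a^{(k)}_{ik} a^{(k)}_{kj} / a^{(k)}_{kk}
   for k < i, j; other entries are left unchanged (they are never used). *)
Definition ge_step n (k : 'I_n) (A : 'M[F]_n) : 'M[F]_n :=
  \matrix_(i, j) if (k < i)%N && (k < j)%N
                 then A i j - A i k * A k j / A k k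
                 else A i j.

(* ge_iter A k = a^{(k+1)} in the paper's 1-based notation (ge_iter A 0 = A);
   for k < n, ge_iter A k.+1 = ge_step k (ge_iter A k). *)
Fixpoint ge_iter n (A : 'M[F]_n) (k : nat) : 'M[F]_n :=
  match k with
  | 0 => A
  | k'.+1 => let B := ge_iter A k' in
             if @insub _ (fun m => (m < n)%N) 'I_n k' is Some kk then ge_step kk B else B
  end.

Definition ge_defined n (A : 'M[F]_n) : Prop :=
  forall k : 'I_n, (k.+1 < n)%N -> ge_iter A k k k != 0.

Definition CPset n : set 'M[F]_n :=
  [set A | A \in unitmx /\ ge_defined A /\
     forall (k i j : 'I_n), (k <= i)%N -> (k <= j)%N ->
       nrm (ge_iter A k i j) <= nrm (ge_iter A k k k)].

Definition growth n (A : 'M[F]_n) : R :=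
  (\big[Num.max/0]_(k < n) \big[Num.max/0]_(i < n | (k <= i)%N)
      \big[Num.max/0]_(j < n | (k <= j)%N) nrm (ge_iter A k i j))
  / (\big[Num.max/0]_(i < n) \big[Num.max/0]_(j < n) nrm (A i j)).

Definition gCP n : \bar R := ereal_sup [set (growth A)%:E | A in @CPset n].
End GE.

Inductive scalars := SReal | SComplex.

Definition gCPS (R : realType) (S : scalars) (n : nat) : \bar R :=
  match S with
  | SReal => gCP (F := R) (fun x : R => `|x|) n
  | SComplex => gCP (F := R[i]) (@ComplexField.Normc.normc R) n
  end.

Definition qpoch (R : realType) (x q : R) : R :=
  limn (fun N : nat => \prod_(i < N) (1 - x * q ^+ i)).

From HB Require Import structures.
From mathcomp Require Import all_boot all_order all_algebra.
From mathcomp Require Import all_classical all_reals all_analysis.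
From mathcomp Require Import complex.
From mathcomp Require Import zify ring lra.
Import Order.TTheory GRing.Theory Num.Theory.
Local Open Scope ring_scope.
Set Implicit Arguments. Unset Strict Implicit. Unset Printing Implicit Defensive.

(* Let F be a field with an absolute value |.| extending that of the integers
   (R with |.|, or C with the modulus).  The three claims are proved as follows.
   (i)  For A in CP_n and x an entry of A of maximal modulus, diag(x, A) is in
        CP_{n+1}: its first step is void and its later steps are those of A,
        while its largest entry is |x|.  Hence g(diag(x, A)) >= g(A).
   (ii) For A in CP_n, the interleaved Kronecker product A (x) [[1,1],[1,-1]] is
        in CP_{2n}: after 2k steps its active block is A^{(k)} (x) [[1,1],[1,-1]],
        its pivots are a^{(k)}_{kk} and -2 a^{(k)}_{kk}, and its largest entry
        is that of A.  Hence its growth factor is 2 g(A).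
   In both cases membership in CP is checked on the pivots alone, since det A
   is the product of the pivots, and a matrix-level inequality c g(A) <= g(B)
   passes to the suprema g[CP_n].
   (iii) is a consequence of (i) and (ii) for any sequence: by induction on m
        the bound holds on [k, 2^(m+1) k) with the constant C (1/k;1/2)_{m+1}/(1-1/k),
        and the partial products (1/k;1/2)_N decrease to (1/k;1/2)_oo. *)

Section Elimination.
Variable F : fieldType.

Lemma ge_iterS n (A : 'M[F]_n) k (lt_kn : (k < n)%N) :
  ge_iter A k.+1 = ge_step (Ordinal lt_kn) (ge_iter A k).
Proof. by rewrite /= insubT. Qed.

Lemma ge_iter_stop n (A : 'M[F]_n) k : (n <= k)%N -> ge_iter A k.+1 = ge_iter A k.
Proof. by move=> le_nk; rewrite /= insubF // ltnNge le_nk. Qed.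

(* Step k leaves row k and column k (and everything above/left) untouched, so
   an entry in row or column i <= k is final from step k on. *)
Lemma ge_iter_settled n (A : 'M[F]_n) k m (i j : 'I_n) :
  ((i <= k) || (j <= k))%N -> (k <= m)%N -> ge_iter A m i j = ge_iter A k i j.
Proof.
move=> ij_k; elim: m => [|m IHm]; first by rewrite leqn0 => /eqP->.
rewrite leq_eqVlt => /orP [/eqP <- // | lt_km]; rewrite -IHm //.
case: (ltnP m n) => [lt_mn | le_nm]; last by rewrite ge_iter_stop.
rewrite (ge_iterS _ lt_mn) mxE /=.
by have -> : ((m < i) && (m < j))%N = false by case/orP: ij_k => ?; lia.
Qed.

(* The matrix after k steps, with the eliminated subdiagonal entries of the
   first k columns set to zero (the recursion never reads them). *)
Definition partial_elim n (A : 'M[F]_n) k : 'M[F]_n :=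
  \matrix_(i, j) if (j < k)%N && (j < i)%N then 0 else ge_iter A k i j.

(* Step k as a row operation: subtract multiples of the pivot row k from the
   rows below it; this is a unit lower triangular transformation. *)
Definition row_elim_mx n (B : 'M[F]_n) (k : 'I_n) : 'M[F]_n :=
  1%:M - (\col_i (if (k < i)%N then B i k / B k k else 0)) *m delta_mx 0 k.

Lemma det_row_elim_mx n (B : 'M[F]_n) (k : 'I_n) : \det (row_elim_mx B k) = 1.
Proof.
rewrite det_trig; last first.
  apply/is_trig_mxP => i j lt_ij; rewrite !mxE big_ord1 !mxE.
  rewrite (_ : (i == j) = false); last by apply/negbTE/eqP => /(congr1 val) /=; lia.
  case: (ltnP k i) => lt_ki; last by rewrite mul0r subr0.
  by rewrite (_ : (j == k) = false) ?mulr0 ?subr0 //; apply/negbTE/eqP => /(congr1 val) /=; lia.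
rewrite big1 // => i _; rewrite !mxE big_ord1 !mxE eqxx /=.
case: (ltnP k i) => lt_ki; rewrite ?mul0r ?subr0 //.
by rewrite (_ : (i == k) = false) ?mulr0 ?subr0 //; apply/negbTE/eqP => /(congr1 val) /=; lia.
Qed.

Lemma partial_elimS n (A : 'M[F]_n) k (lt_kn : (k < n)%N) : ge_defined A ->
  partial_elim A k.+1 = row_elim_mx (ge_iter A k) (Ordinal lt_kn) *m partial_elim A k.
Proof.
move=> def_A; rewrite mulmxBl mul1mx -mulmxA -rowE.
apply/matrixP => i j; rewrite !mxE big_ord1 !mxE (ge_iterS _ lt_kn) mxE /=.
case: (ltnP k i) => lt_ki /=; last first.
  rewrite mul0r subr0; case: (ltnP j i) => lt_ji; last by rewrite !andbF.
  have lt_jk : (j < k)%N by lia.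
  by rewrite ltnS (ltnW lt_jk) lt_jk.
case: (ltngtP j k) => jk /=.
- have lt_ji : (j < i)%N by lia.
  by rewrite lt_ji ltnS (ltnW jk) mulr0 subr0.
- by rewrite ltnS leqNgt jk /= mulrAC.
- have -> : j = Ordinal lt_kn by apply: val_inj.
  rewrite /= ltnSn lt_ki mulfVK ?subrr //.
  by apply: def_A => /=; have := ltn_ord i; lia.
Qed.

(* Elimination is determinant preserving: det A is the product of the pivots. *)
Lemma det_pivots n (A : 'M[F]_n) : ge_defined A ->
  \det A = \prod_(i < n) ge_iter A i i i.
Proof.
move=> def_A.
have det_partial k : (k <= n)%N -> \det (partial_elim A k) = \det A.
  elim: k => [_|k IHk lt_kn].
    by congr (\det _); apply/matrixP => i j; rewrite mxE.
  by rewrite (partial_elimS lt_kn def_A) det_mulmx det_row_elim_mx mul1r (IHk (ltnW lt_kn)).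
rewrite -(det_partial n (leqnn n)) -det_tr det_trig.
  apply: eq_bigr => i _; rewrite !mxE ltnn andbF.
  by apply: ge_iter_settled; rewrite ?leqnn // ltnW.
by apply/is_trig_mxP => i j lt_ij; rewrite !mxE lt_ij ltn_ord.
Qed.

Lemma unitmx_pivots n (A : 'M[F]_n) : ge_defined A ->
  (A \in unitmx) = [forall i : 'I_n, ge_iter A i i i != 0].
Proof.
move=> def_A; rewrite unitmxE unitfE det_pivots //.
apply/prodf_neq0/forallP => [nz i | nz i _]; exact: nz.
Qed.

End Elimination.

Section Growth.
Variables (R : realType) (F : fieldType) (nrm : F -> R).

Definition max_elim n (A : 'M[F]_n) : R :=
  \big[Num.max/0]_(k < n) \big[Num.max/0]_(i < n | (k <= i)%N)
      \big[Num.max/0]_(j < n | (k <= j)%N) nrm (ge_iter A k i j).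

Definition max_entry n (A : 'M[F]_n) : R :=
  \big[Num.max/0]_(i < n) \big[Num.max/0]_(j < n) nrm (A i j).

Lemma max_elim_ge n (A : 'M[F]_n) (k i j : 'I_n) : (k <= i)%N -> (k <= j)%N ->
  nrm (ge_iter A k i j) <= max_elim A.
Proof.
move=> le_ki le_kj; rewrite /max_elim (bigmaxD1 k) // le_max; apply/orP; left.
rewrite (bigmaxD1 i) // le_max; apply/orP; left.
by rewrite (bigmaxD1 j) // le_max lexx.
Qed.

Lemma max_elim_le n (A : 'M[F]_n) c : 0 <= c ->
  (forall k i j : 'I_n, (k <= i)%N -> (k <= j)%N -> nrm (ge_iter A k i j) <= c) ->
  max_elim A <= c.
Proof.
move=> c_ge0 bound; do 3![apply: bigmax_le => // ? ?].
by apply: bound.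
Qed.

Lemma max_entry_ge n (A : 'M[F]_n) (i j : 'I_n) : nrm (A i j) <= max_entry A.
Proof.
rewrite /max_entry (bigmaxD1 i) // le_max; apply/orP; left.
by rewrite (bigmaxD1 j) // le_max lexx.
Qed.

Lemma max_entry_le n (A : 'M[F]_n) c : 0 <= c ->
  (forall i j : 'I_n, nrm (A i j) <= c) -> max_entry A <= c.
Proof. by move=> c_ge0 bound; do 2![apply: bigmax_le => // ? ?]. Qed.

Lemma growth_compare m n (A : 'M[F]_m) (B : 'M[F]_n) c : 0 <= c ->
  c * max_elim A <= max_elim B -> 0 < max_entry B -> max_entry B <= max_entry A ->
  c * growth nrm A <= growth nrm B.
Proof.
move=> c_ge0 le_elim entryB_gt0 le_entry.
have elimB_ge0 : 0 <= max_elim B by apply: bigmax_ge_id.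
rewrite [growth _ _]/= [growth _ B]/= -/(max_elim A) -/(max_elim B).
rewrite -/(max_entry A) -/(max_entry B) mulrA.
apply: le_trans (_ : max_elim B / max_entry A <= _).
  by rewrite ler_wpM2r // invr_ge0 (le_trans (ltW entryB_gt0)).
by rewrite ler_wpM2l // lef_pV2 ?posrE // (lt_le_trans entryB_gt0).
Qed.

Definition pivot_dominant n (A : 'M[F]_n) : Prop :=
  forall k i j : 'I_n, (k <= i)%N -> (k <= j)%N ->
    nrm (ge_iter A k i j) <= nrm (ge_iter A k k k).

Lemma CPsetP n (A : 'M[F]_n) :
  CPset nrm A <-> (forall k : 'I_n, ge_iter A k k k != 0) /\ pivot_dominant A.
Proof.
split=> [[unit_A [def_A dom_A]] | [piv_A dom_A]].
  by split=> // k; move: unit_A; rewrite unitmx_pivots // => /forallP.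
have def_A : ge_defined A by move=> k _; exact: piv_A.
by split; [rewrite unitmx_pivots //; apply/forallP | split].
Qed.

Lemma gCP_transfer n m (c : R) : 0 < c ->
  (forall A : 'M[F]_n, CPset nrm A -> exists B : 'M[F]_m,
      CPset nrm B /\ c * growth nrm A <= growth nrm B) ->
  (c%:E * gCP nrm n <= gCP nrm m)%E.
Proof.
move=> c_gt0 construct.
have le_sup : (gCP nrm n <= c^-1%:E * gCP nrm m)%E.
  apply: ge_ereal_sup => _ [A CP_A <-].
  rewrite lee_pdivlMl //; have [B [CP_B le_AB]] := construct A CP_A.
  apply: (@le_trans _ _ (growth nrm B)%:E); first by rewrite -EFinM lee_fin.
  by apply: ereal_sup_ubound; exists B.
apply: le_trans (lee_wpmul2l _ le_sup) _; first by rewrite lee_fin ltW.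
by rewrite muleA -EFinM divff ?gt_eqF // mul1e.
Qed.

End Growth.

Record absolute_value (R : realType) (F : fieldType) (nrm : F -> R) : Prop := {
  absv_gt0 : forall x, x != 0 -> 0 < nrm x;
  absv0 : nrm 0 = 0;
  absvM : forall x y, nrm (x * y) = nrm x * nrm y;
  absvD : forall x y, nrm (x + y) <= nrm x + nrm y;
  absvN1 : nrm (-1) = 1;
  absv2 : nrm 2 = 2 }.

Section AbsoluteValue.
Variables (R : realType) (F : fieldType) (nrm : F -> R).
Hypothesis nrmP : absolute_value nrm.

Lemma nrm_ge0 x : 0 <= nrm x.
Proof.
have [->|x_neq0] := eqVneq x 0; first by rewrite (absv0 nrmP).
exact/ltW/(absv_gt0 nrmP).
Qed.

Lemma nrm1 : nrm 1 = 1.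
Proof.
have -> : (1 : F) = -1 * -1 by rewrite mulrNN mulr1.
by rewrite (absvM nrmP) (absvN1 nrmP) mulr1.
Qed.

Lemma nrmN x : nrm (- x) = nrm x.
Proof. by rewrite -mulN1r (absvM nrmP) (absvN1 nrmP) mul1r. Qed.

Lemma nrm_div x y : nrm (x / y) = nrm x / nrm y.
Proof.
have [->|y_neq0] := eqVneq y 0; first by rewrite invr0 mulr0 (absv0 nrmP) invr0 mulr0.
apply: (@mulIf _ (nrm y)); first by rewrite gt_eqF ?(absv_gt0 nrmP).
by rewrite -(absvM nrmP) !divfK // gt_eqF ?(absv_gt0 nrmP).
Qed.

Lemma two_neq0 : (2 : F) != 0.
Proof.
apply/eqP => two_eq0; have := absv2 nrmP.
by rewrite two_eq0 (absv0 nrmP); clear two_eq0 => zero_eq2; lra.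
Qed.

Lemma nrm_elim_le (a b c p : F) : p != 0 ->
  nrm a <= nrm p -> nrm b <= nrm p -> nrm c <= nrm p ->
  nrm (a - b * c / p) <= 2 * nrm p.
Proof.
move=> p_neq0 le_a le_b le_c; have p_gt0 := absv_gt0 nrmP p_neq0.
apply: le_trans (absvD nrmP _ _) _; rewrite nrmN nrm_div (absvM nrmP).
suff : nrm b * nrm c / nrm p <= nrm p by lra.
by rewrite ler_pdivrMr // -expr2 ler_pM // nrm_ge0.
Qed.

End AbsoluteValue.

Section Border.
Variable F : fieldType.

Definition border_mx n (x : F) (X : 'M[F]_n) : 'M[F]_n.+1 :=
  \matrix_(i, j) match unlift ord0 i, unlift ord0 j with
                 | Some i', Some j' => X i' j'
                 | None, None => x
                 | _, _ => 0 end.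

Lemma border_mx_lift n x (X : 'M[F]_n) i j :
  border_mx x X (lift ord0 i) (lift ord0 j) = X i j.
Proof. by rewrite mxE !liftK. Qed.
Lemma border_mx00 n x (X : 'M[F]_n) : border_mx x X ord0 ord0 = x.
Proof. by rewrite mxE unlift_none. Qed.
Lemma border_mx0l n x (X : 'M[F]_n) j : border_mx x X ord0 (lift ord0 j) = 0.
Proof. by rewrite mxE unlift_none liftK. Qed.
Lemma border_mxl0 n x (X : 'M[F]_n) i : border_mx x X (lift ord0 i) ord0 = 0.
Proof. by rewrite mxE unlift_none liftK. Qed.
Definition border_mxE := (border_mx_lift, border_mx00, border_mx0l, border_mxl0).

Lemma ge_step_border n x (X : 'M[F]_n) (k : 'I_n) :
  ge_step (lift ord0 k) (border_mx x X) = border_mx x (ge_step k X).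
Proof.
apply/matrixP => i j; rewrite [LHS]mxE.
case: (unliftP ord0 i) => [i'|] ->; case: (unliftP ord0 j) => [j'|] ->;
  rewrite ?lift0 ?ltnS ?ltn0 ?andbF ?border_mxE //.
by rewrite mxE.
Qed.

Lemma ge_iter_border n x (X : 'M[F]_n) k :
  ge_iter (border_mx x X) k.+1 = border_mx x (ge_iter X k).
Proof.
elim: k => [|k IHk].
  rewrite (ge_iterS _ (ltn0Sn n)); apply/matrixP => i j; rewrite mxE.
  have -> : Ordinal (ltn0Sn n) = ord0 by apply: val_inj.
  case: (unliftP ord0 i) => [i'|] ->; case: (unliftP ord0 j) => [j'|] ->;
    rewrite ?lift0 ?ltn0 ?andbF //= border_mxl0 !mul0r subr0 //.
case: (ltnP k n) => [lt_kn | le_nk]; last by rewrite ge_iter_stop // IHk ge_iter_stop.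
rewrite (ge_iterS _ (lt_kn : (k.+1 < n.+1)%N)) IHk (ge_iterS _ lt_kn) -ge_step_border.
by congr ge_step; apply: val_inj.
Qed.

Lemma ge_iter_border_lift n x (X : 'M[F]_n) (k i j : 'I_n) :
  ge_iter (border_mx x X) (lift ord0 k) (lift ord0 i) (lift ord0 j) = ge_iter X k i j.
Proof. by rewrite lift0 ge_iter_border border_mx_lift. Qed.

End Border.

Section BorderGrowth.
Variables (R : realType) (F : fieldType) (nrm : F -> R).
Hypothesis nrmP : absolute_value nrm.

Lemma border_CP n x (X : 'M[F]_n) : x != 0 -> (forall i j, nrm (X i j) <= nrm x) ->
  CPset nrm X -> CPset nrm (border_mx x X).
Proof.
move=> x_neq0 le_x /CPsetP [piv_X dom_X]; apply/CPsetP; split.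
  move=> k; case: (unliftP ord0 k) => [k'|] ->; last by rewrite /= border_mx00.
  by rewrite ge_iter_border_lift.
move=> k i j; case: (unliftP ord0 k) => [k'|] ->.
  case: (unliftP ord0 i) => [i'|] ->; last by rewrite lift0.
  case: (unliftP ord0 j) => [j'|] ->; last by rewrite lift0.
  rewrite !lift0 !ltnS !ge_iter_border_lift; exact: dom_X.
move=> _ _ /=; rewrite border_mx00.
case: (unliftP ord0 i) => [i'|] ->; case: (unliftP ord0 j) => [j'|] ->;
  by rewrite ?border_mxE ?(absv0 nrmP) ?(nrm_ge0 nrmP).
Qed.

(* Monotonicity construction: for A in CP_{n+1} and x an entry of maximal
   modulus, diag(x, A) is in CP_{n+2} with g(diag(x, A)) >= g(A). *)
Lemma border_growth n (A : 'M[F]_n.+1) : CPset nrm A ->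
  exists B : 'M[F]_n.+2, CPset nrm B /\ 1 * growth nrm A <= growth nrm B.
Proof.
move=> CP_A; have /CPsetP [piv_A _] := CP_A.
pose absA p := nrm (A p.1 p.2).
have [[p q] _ max_pq] := arg_maxP absA (erefl true : xpredT (ord0, ord0)).
set x := A p q; have le_x i j : nrm (A i j) <= nrm x by exact: (max_pq (i, j)).
have x_neq0 : x != 0.
  apply: contraTneq (le_x ord0 ord0) => x_eq0.
  rewrite x_eq0 (absv0 nrmP) -ltNge; apply: (absv_gt0 nrmP); exact: (piv_A ord0).
exists (border_mx x A); split; first exact: border_CP.
apply: growth_compare => //.
- rewrite mul1r; apply: max_elim_le; first exact: bigmax_ge_id.
  move=> k i j le_ki le_kj; rewrite -(ge_iter_border_lift x).
  by apply: max_elim_ge; rewrite !lift0 ltnS.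
- by apply: lt_le_trans (max_entry_ge _ _ ord0 ord0); rewrite border_mx00 (absv_gt0 nrmP).
- apply: max_entry_le; first exact: bigmax_ge_id.
  move=> i j; apply: le_trans (max_entry_ge _ A p q).
  case: (unliftP ord0 i) => [i'|] ->; case: (unliftP ord0 j) => [j'|] ->;
    by rewrite ?border_mxE ?(absv0 nrmP) ?nrm_ge0.
Qed.

End BorderGrowth.

Section Hadamard.
Variable F : fieldType.

Lemma half_ord_lt n (i : 'I_(2 * n)) : (i %/ 2 < n)%N.
Proof. have := ltn_ord i; lia. Qed.

(* An index i < 2n read as the pair (i %/ 2, odd i). *)
Definition half_ord n (i : 'I_(2 * n)) : 'I_n := Ordinal (half_ord_lt i).

Definition hadamard_sign (a b : bool) : F := if a && b then -1 else 1.

(* The Kronecker product A (x) [[1, 1], [1, -1]], with indices interleaved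
   so that row/column i of the product comes from row/column i %/ 2 of A. *)
Definition kron_hadamard n (A : 'M[F]_n) : 'M[F]_(2 * n) :=
  \matrix_(i, j) (A (half_ord i) (half_ord j) * hadamard_sign (odd i) (odd j)).

Section ParityIndices.
Variables (n k : nat) (lt_kn : (k < n)%N).

Lemma even_ord_lt : (2 * k < 2 * n)%N. Proof. lia. Qed.
Lemma odd_ord_lt : ((2 * k).+1 < 2 * n)%N. Proof. lia. Qed.

Definition even_ord : 'I_(2 * n) := Ordinal even_ord_lt.
Definition odd_ord : 'I_(2 * n) := Ordinal odd_ord_lt.

Lemma half_even_ord : half_ord even_ord = Ordinal lt_kn.
Proof. apply: val_inj => /=; lia. Qed.
Lemma half_odd_ord : half_ord odd_ord = Ordinal lt_kn.
Proof. apply: val_inj => /=; lia. Qed.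

End ParityIndices.

Lemma even_or_odd_ord n (s : 'I_(2 * n)) :
  exists k (lt_kn : (k < n)%N), s = even_ord lt_kn \/ s = odd_ord lt_kn.
Proof.
exists (s %/ 2)%N, (half_ord_lt s).
have := odd_double_half s; rewrite -divn2 -addnn.
by case: (odd s) => /= s_eq; [right | left]; apply: val_inj => /=; lia.
Qed.

Section KronElim.
Variables (n : nat) (A : 'M[F]_n).
Hypothesis piv_A : forall k : 'I_n, ge_iter A k k k != 0.
Local Notation M := (kron_hadamard A).

Definition kron_invariant k := forall i j : 'I_(2 * n), (2 * k <= i)%N -> (2 * k <= j)%N ->
  ge_iter M (2 * k) i j = ge_iter A k (half_ord i) (half_ord j) * hadamard_sign (odd i) (odd j).

Lemma kron_odd_step k (lt_kn : (k < n)%N) : kron_invariant k ->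
  forall i j : 'I_(2 * n), ((2 * k).+1 <= i)%N -> ((2 * k).+1 <= j)%N ->
  ge_iter M (2 * k).+1 i j =
    ge_iter A k (half_ord i) (half_ord j) * hadamard_sign (odd i) (odd j)
    - ge_iter A k (half_ord i) (Ordinal lt_kn) * ge_iter A k (Ordinal lt_kn) (half_ord j)
      / ge_iter A k (Ordinal lt_kn) (Ordinal lt_kn).
Proof.
move=> inv_k i j lt_i lt_j; rewrite (ge_iterS _ (even_ord_lt lt_kn)) mxE /=.
have -> : ((2 * k < i)%N && (2 * k < j)%N) by apply/andP.
rewrite !inv_k ?leqnn ?(ltnW lt_i) ?(ltnW lt_j) // half_even_ord /= oddM.
by rewrite /hadamard_sign !andbF !mulr1.
Qed.

Hypothesis nz2 : (2 : F) != 0.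

(* Step 2k+1 has pivot -2 a^{(k)}_{kk} and restores the invariant. *)
Lemma kron_invariantS k (lt_kn : (k < n)%N) : kron_invariant k -> kron_invariant k.+1.
Proof.
move=> inv_k i j; rewrite (_ : 2 * k.+1 = (2 * k).+2)%N; last by lia.
move=> lt_i lt_j; rewrite [in RHS](ge_iterS _ lt_kn) [in RHS]mxE.
have -> : (k < half_ord i)%N && (k < half_ord j)%N by apply/andP; split => /=; lia.
rewrite (ge_iterS _ (odd_ord_lt lt_kn)) mxE /=.
have -> : ((2 * k).+1 < i)%N && ((2 * k).+1 < j)%N by apply/andP.
rewrite !(kron_odd_step lt_kn inv_k) /= ?leqnn ?(ltnW lt_i) ?(ltnW lt_j) //.
rewrite half_odd_ord oddM /=.
have := piv_A (Ordinal lt_kn).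
set p := ge_iter A k (Ordinal lt_kn) (Ordinal lt_kn) => p_neq0.
have -> : p * hadamard_sign true true - p * p / p = - (2 * p).
  by rewrite /hadamard_sign /=; field.
by case: (odd i); case: (odd j); rewrite /hadamard_sign /=; field;
  rewrite p_neq0 oppr_eq0 mulf_neq0.
Qed.

Lemma kron_invariant_all k : (k <= n)%N -> kron_invariant k.
Proof.
elim: k => [_ i j _ _ | k IHk lt_kn]; first by rewrite mxE.
exact: kron_invariantS (IHk (ltnW lt_kn)).
Qed.

Lemma kron_pivot_even k (lt_kn : (k < n)%N) :
  ge_iter M (even_ord lt_kn) (even_ord lt_kn) (even_ord lt_kn) =
    ge_iter A k (Ordinal lt_kn) (Ordinal lt_kn).
Proof.
by rewrite kron_invariant_all ?(ltnW lt_kn) // half_even_ord /= oddM /hadamard_sign mulr1.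
Qed.

Lemma kron_pivot_odd k (lt_kn : (k < n)%N) :
  ge_iter M (odd_ord lt_kn) (odd_ord lt_kn) (odd_ord lt_kn) =
    - (2 * ge_iter A k (Ordinal lt_kn) (Ordinal lt_kn)).
Proof.
rewrite (kron_odd_step lt_kn (kron_invariant_all (ltnW lt_kn))) // half_odd_ord /= oddM.
by have := piv_A (Ordinal lt_kn); rewrite /hadamard_sign /= => p_neq0; field.
Qed.

End KronElim.
End Hadamard.

Section KronGrowth.
Variables (R : realType) (F : fieldType) (nrm : F -> R).
Hypothesis nrmP : absolute_value nrm.
Let nz2 : (2 : F) != 0 := two_neq0 nrmP.

Lemma nrm_hadamard_sign a b : nrm (hadamard_sign F a b) = 1.
Proof. by rewrite /hadamard_sign; case: (a && b); rewrite ?(absvN1 nrmP) ?(nrm1 nrmP). Qed.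

Lemma kron_CP n (A : 'M[F]_n) : CPset nrm A -> CPset nrm (kron_hadamard A).
Proof.
move=> /CPsetP [piv_A dom_A]; have inv_A := kron_invariant_all piv_A nz2.
apply/CPsetP; split=> [s | s i j].
  have [k [lt_kn [-> | ->]]] := even_or_odd_ord s; have p_neq0 := piv_A (Ordinal lt_kn).
    by rewrite (kron_pivot_even piv_A nz2).
  by rewrite (kron_pivot_odd piv_A nz2) oppr_eq0 mulf_neq0 ?nz2.
have dom_k k (lt_kn : (k < n)%N) (i' j' : 'I_n) : (k <= i')%N -> (k <= j')%N ->
    nrm (ge_iter A k i' j') <= nrm (ge_iter A k (Ordinal lt_kn) (Ordinal lt_kn)).
  exact: (dom_A (Ordinal lt_kn)).
have [k [lt_kn [-> | ->]]] := even_or_odd_ord s => le_i le_j; rewrite /= in le_i le_j.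
  rewrite (kron_pivot_even piv_A nz2) inv_A ?(ltnW lt_kn) //.
  by rewrite (absvM nrmP) nrm_hadamard_sign mulr1; apply: dom_k => /=; lia.
rewrite (kron_pivot_odd piv_A nz2) (kron_odd_step lt_kn (inv_A _ (ltnW lt_kn))) //.
rewrite (nrmN nrmP) (absvM nrmP) (absv2 nrmP).
apply: (nrm_elim_le nrmP (piv_A _)); rewrite ?(absvM nrmP) ?nrm_hadamard_sign ?mulr1;
  by apply: dom_k => /=; lia.
Qed.

(* Every pivot of A appears doubled (up to sign) among the pivots of
   A (x) H, so the elimination maximum at least doubles. *)
Lemma kron_max_elim n (A : 'M[F]_n) : CPset nrm A ->
  2 * max_elim nrm A <= max_elim nrm (kron_hadamard A).
Proof.
move=> /CPsetP [piv_A dom_A].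
have pivot_le (k : 'I_n) : 2 * nrm (ge_iter A k k k) <= max_elim nrm (kron_hadamard A).
  have := max_elim_ge nrm (kron_hadamard A)
    (leqnn (odd_ord (ltn_ord k))) (leqnn (odd_ord (ltn_ord k))).
  rewrite (kron_pivot_odd piv_A nz2) (nrmN nrmP) (absvM nrmP) (absv2 nrmP).
  by have -> : Ordinal (ltn_ord k) = k by apply: val_inj.
suff : max_elim nrm A <= max_elim nrm (kron_hadamard A) / 2.
  by rewrite ler_pdivlMr // mulrC.
apply: max_elim_le => [|k i j le_ki le_kj]; first by rewrite divr_ge0 ?bigmax_ge_id.
rewrite ler_pdivlMr // mulrC; apply: le_trans (pivot_le k).
by rewrite ler_pM2l //; exact: dom_A.
Qed.

Lemma kron_max_entry n (A : 'M[F]_n) :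
  max_entry nrm (kron_hadamard A) <= max_entry nrm A.
Proof.
apply: max_entry_le => [|i j]; first exact: bigmax_ge_id.
by rewrite mxE (absvM nrmP) nrm_hadamard_sign mulr1; exact: max_entry_ge.
Qed.

Lemma kron_growth n (A : 'M[F]_n.+1) : CPset nrm A ->
  exists B : 'M[F]_(2 * n.+1), CPset nrm B /\ 2 * growth nrm A <= growth nrm B.
Proof.
move=> CP_A; have /CPsetP [piv_A _] := CP_A.
exists (kron_hadamard A); split; first exact: kron_CP.
apply: growth_compare; rewrite ?kron_max_elim ?kron_max_entry //.
set s := even_ord (ltn0Sn n); apply: lt_le_trans (max_entry_ge _ _ s s).
by rewrite mxE half_even_ord /hadamard_sign /= mulr1 (absv_gt0 nrmP) ?(piv_A ord0).
Qed.

End KronGrowth.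

Section Suprema.
Variables (R : realType) (F : fieldType) (nrm : F -> R).
Hypothesis nrmP : absolute_value nrm.

Lemma gCP_succ n : (1 <= n)%N -> (gCP nrm n <= gCP nrm n.+1)%E.
Proof.
case: n => // n _; rewrite -[X in (X <= _)%E]mul1e.
by apply: gCP_transfer => // A; exact: border_growth.
Qed.

Lemma gCP_double n : (1 <= n)%N -> (2%:E * gCP nrm n <= gCP nrm (2 * n))%E.
Proof. by case: n => // n _; apply: gCP_transfer => // A; exact: kron_growth. Qed.

End Suprema.

Section QPochhammer.
Variable R : realType.

Definition qprod (x q : R) (N : nat) : R := \prod_(i < N) (1 - x * q ^+ i).

Variables (x q : R).
Hypotheses (x_ge0 : 0 <= x) (x_lt1 : x < 1) (q_ge0 : 0 <= q) (q_le1 : q <= 1).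

Lemma qprod_factor i : 0 <= 1 - x * q ^+ i <= 1.
Proof.
have /andP [xq_ge0 xq_le] : 0 <= x * q ^+ i <= x.
  by rewrite mulr_ge0 ?exprn_ge0 ?ler_piMr ?exprn_ile1.
by rewrite subr_ge0 (le_trans xq_le (ltW x_lt1)) gerBl.
Qed.

Lemma qprod_ge0 N : 0 <= qprod x q N.
Proof. by apply: prodr_ge0 => i _; case/andP: (qprod_factor i). Qed.

Lemma qprodS_le N : qprod x q N.+1 <= qprod x q N.
Proof.
rewrite /qprod big_ord_recr /= ler_piMr ?qprod_ge0 //.
by case/andP: (qprod_factor N).
Qed.

Lemma qpoch_le_qprod N : qpoch x q <= qprod x q N.
Proof.
have dec_qprod : nonincreasing_seq (qprod x q) by apply/nonincreasing_seqP; exact: qprodS_le.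
have lbound_qprod : has_lbound (range (qprod x q)).
  by exists 0 => _ [m _ <-]; exact: qprod_ge0.
exact: nonincreasing_cvgn_ge dec_qprod (nonincreasing_is_cvgn dec_qprod lbound_qprod) N.
Qed.

End QPochhammer.

Section LinearBound.
Variables (R : realType) (g : nat -> \bar R).
Hypothesis g_succ : forall n, (1 <= n)%N -> (g n <= g n.+1)%E.
Hypothesis g_double : forall n, (1 <= n)%N -> (2%:E * g n <= g (2 * n))%E.
Variables (k : nat) (C : R).
Hypotheses (k_ge2 : (2 <= k)%N) (C_gt0 : 0 < C).
Hypothesis g_base : forall n, (k <= n <= 2 * k - 1)%N -> ((C * n%:R)%:E <= g n)%E.

Let x : R := k%:R^-1.
Let k_gt0 : (0 : R) < k%:R. Proof. by rewrite ltr0n; lia. Qed.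
Let x_ge0 : 0 <= x. Proof. by rewrite invr_ge0 ltW. Qed.
Let x_lt1 : x < 1. Proof. by rewrite invf_lt1 // ltr1n; lia. Qed.
Let half_ge0 : (0 : R) <= 2^-1. Proof. by rewrite invr_ge0. Qed.
Let half_le1 : (2^-1 : R) <= 1. Proof. by rewrite invf_le1 //; lra. Qed.
Let qprod_half_ge0 N : 0 <= qprod x 2^-1 N.
Proof. exact: qprod_ge0. Qed.
Let qprod_half_decr N : qprod x 2^-1 N.+1 <= qprod x 2^-1 N.
Proof. exact: qprodS_le. Qed.

(* The bound on the dyadic range [k, 2^(m+1) k), by induction on m: for
   n >= 2^(m+1) k, g n >= g (2 (n/2)) >= 2 g (n/2), and the rounding in n/2
   costs the next factor 1 - x / 2^(m+1) of the partial product. *)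
Lemma dyadic_bound m n : (k <= n)%N -> (n < 2 ^ m.+1 * k)%N ->
  ((qprod x 2^-1 m.+1 / (1 - x) * C * n%:R)%:E <= g n)%E.
Proof.
have x_lt1' : 0 < 1 - x by rewrite subr_gt0.
elim: m n => [|m IHm] n le_kn lt_n.
  rewrite /qprod big_ord1 expr0 mulr1 divff ?gt_eqF // mul1r.
  by apply: g_base; rewrite le_kn /=; rewrite expn1 in lt_n; lia.
set c := qprod x 2^-1 m.+1 / (1 - x) * C.
have c_ge0 : 0 <= c by rewrite mulr_ge0 ?divr_ge0 ?qprod_half_ge0 ?ltW.
case: (ltnP n (2 ^ m.+1 * k)) => [lt_n' | ge_n].
  apply: le_trans (IHm n le_kn lt_n'); rewrite lee_fin ler_wpM2r //.
  by rewrite ler_wpM2r ?(ltW C_gt0) // ler_wpM2r ?invr_ge0 ?(ltW x_lt1') ?qprod_half_decr.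
set h := (n %/ 2)%N.
have le_kh : (k <= h)%N.
  have : (2 * k <= 2 ^ m.+1 * k)%N by rewrite leq_mul2r expnS leq_pmulr ?expn_gt0 ?orbT.
  by rewrite /h; lia.
have lt_h : (h < 2 ^ m.+1 * k)%N.
  have : (n < 2 * (2 ^ m.+1 * k))%N by rewrite mulnA -expnS.
  by rewrite /h; lia.
have g_2h : (g (2 * h)%N <= g n)%E.
  have [-> | ->] : n = (2 * h)%N \/ n = (2 * h).+1 by rewrite /h; lia.
    by rewrite lexx.
  by apply: g_succ; lia.
apply: le_trans g_2h; apply: le_trans (g_double (_ : 0 < h)%N); last by lia.
apply: le_trans (lee_wpmul2l _ (IHm h le_kh lt_h)); last by [].
rewrite -EFinM lee_fin /qprod big_ord_recr /= -/(qprod _ _ _).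
set y := x * 2^-1 ^+ m.+1.
have y_n : 1 <= y * n%:R.
  have -> : y = ((2 ^ m.+1 * k)%N%:R)^-1 by rewrite natrM natrX invfM /y exprVn mulrC.
  by rewrite ler_pdivlMl ?mulr1 ?ler_nat // ltr0n muln_gt0 expn_gt0; lia.
have n_le : n%:R <= 2 * h%:R + 1 :> R.
  have : (n <= 2 * h + 1)%N by rewrite /h; lia.
  by rewrite -(ler_nat R) natrD natrM.
have -> : qprod x 2^-1 m.+1 * (1 - y) / (1 - x) * C * n%:R = c * ((1 - y) * n%:R).
  by rewrite /c; ring.
have key : (1 - y) * n%:R <= 2 * h%:R by nra.
by rewrite [2 * _]mulrCA; exact: ler_wpM2l c_ge0 _ _ key.
Qed.

(* Part (iii) for any sequence satisfying (i) and (ii): each n >= k lies in a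
   dyadic range, and (1/k;1/2)_oo is below every partial product. *)
Lemma linear_growth_bound n : (k <= n)%N ->
  ((qpoch (k%:R^-1) (2^-1) / (1 - k%:R^-1) * C * n%:R)%:E <= g n)%E.
Proof.
move=> le_kn; have lt_n : (n < 2 ^ n.+1 * k)%N.
  by have := ltn_expl n.+1 (isT : (1 < 2)%N); nia.
apply: le_trans (dyadic_bound le_kn lt_n); rewrite lee_fin.
have le_q : qpoch x 2^-1 <= qprod x 2^-1 n.+1 by exact: qpoch_le_qprod.
have inv_gt0 : 0 < (1 - x)^-1 by rewrite invr_gt0 subr_gt0.
have n_gt0 : (0 : R) < n%:R by rewrite ltr0n; lia.
by rewrite !ler_pM2r.
Qed.

End LinearBound.

Lemma normr_absolute_value (R : realType) : absolute_value (fun x : R => `|x|).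
Proof.
split; [by move=> x; rewrite normr_gt0 | exact: normr0 | exact: normrM
       | exact: ler_normD | exact: normrN1 | by rewrite ger0_norm].
Qed.

Lemma normc_absolute_value (R : realType) :
  absolute_value (@ComplexField.Normc.normc R).
Proof.
split.
- move=> z z_neq0; rewrite lt_neqAle eq_sym; apply/andP; split.
    by apply: contra z_neq0 => /eqP /ComplexField.Normc.eq0_normc ->.
  by case: z {z_neq0} => a b; exact: sqrtr_ge0.
- exact: ComplexField.Normc.normc0.
- exact: ComplexField.Normc.normcM.
- exact: le_normcD.
- by rewrite normcN ComplexField.Normc.normc1.
- by have := normcMn (1 : R[i]) 2; rewrite ComplexField.Normc.normc1.
Qed.

Unset Implicit Arguments.

Theorem mainTheorem10 (R : realType) (S : scalars) :
  (forall n : nat, (1 <= n)%N -> (gCPS R S n <= gCPS R S n.+1)%E) /\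
  (forall n : nat, (1 <= n)%N -> (2%:E * gCPS R S n <= gCPS R S (2 * n))%E) /\
  (forall (k : nat) (C : R), (2 <= k)%N -> 0 < C ->
     (forall n : nat, (k <= n <= 2 * k - 1)%N -> ((C * n%:R)%:E <= gCPS R S n)%E) ->
     forall n : nat, (k <= n)%N ->
       ((qpoch (k%:R^-1) (2^-1) / (1 - k%:R^-1) * C * n%:R)%:E <= gCPS R S n)%E).
Proof.
have [g_succ g_double] :
    (forall n, (1 <= n)%N -> (gCPS R S n <= gCPS R S n.+1)%E) /\
    (forall n, (1 <= n)%N -> (2%:E * gCPS R S n <= gCPS R S (2 * n))%E).
  case: S; split; [apply: gCP_succ | apply: gCP_double | apply: gCP_succ | apply: gCP_double];
    by [exact: normr_absolute_value | exact: normc_absolute_value].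
by split=> //; split=> // k C; exact: linear_growth_bound.
Qed.
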